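(* Let $N'E_+(x,t):=\frac{\sqrt x}{2t}\exp\!\left(-\frac{x^2}{4t}\right)$ for $x,t>0$ and $(N'E_+*_tN'E_+)(x,t):=\int_0^tN'E_+(x,t-\tilde t)\,N'E_+(x,\tilde t)\,d\tilde t$. Then $$\int_0^1(N'E_+*_tN'E_+)(x,t)\,dx=\frac12+O(t^\infty),\qquad t\to0^+,$$ i.e. the difference is $O(t^N)$ for every $N$. *)

From Stdlib Require Import Reals ClassicalEpsilon.
Open Scope R_scope.

(* N'E_+(x,t) = sqrt x / (2t) * exp(-x^2/(4t)) for t > 0; extended by 0 for
   t <= 0 (its limit as t -> 0+ for x > 0; only used at endpoints of the
   time integration, where it does not affect the Riemann integral). *)
Definition NEp (x t : R) : R :=
  if Rlt_dec 0 t then sqrt x / (2 * t) * exp (- (x ^ 2) / (4 * t)) else 0.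

(* Riemann integral as a total function: the Stdlib RiemannInt when f is
   Riemann integrable on [a,b], and 0 otherwise (integrability is asserted
   separately in the theorem, so the default value is never relied upon). *)
Definition RInt (f : R -> R) (a b : R) : R :=
  match excluded_middle_informative (inhabited (Riemann_integrable f a b)) with
  | left H =>
      RiemannInt (proj1_sig (constructive_indefinite_description
                    (fun _ : Riemann_integrable f a b => True)
                    (match H with inhabits p => ex_intro _ p I end)))
  | right _ => 0
  end.

Definition NEconv (x t : R) : R :=
  RInt (fun s => NEp x (t - s) * NEp x s) 0 t.

(* For 0 < v < t the time integrand factors as
     N'E_+(x, t - v) N'E_+(x, v) = gamma x v := x alpha(v)/t exp(-x^2 alpha(v)),
   with alpha(v) = t / (4 v (t - v)) >= 1/t.  Writing kappa x v := exp(-x^2 alpha(v)),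
   one has d kappa / dx = -2 t gamma, so with Phi x := int_0^t kappa x v dv and
   Gam x := int_0^t gamma x v dv = (N'E_+ *_t N'E_+)(x, t):
     Phi' = -2 t Gam,  hence  int_0^1 Gam = (Phi 0 - Phi 1)/(2t) = 1/2 - Phi 1/(2t),
   and |Phi 1| <= t e^{-1/t} = O(t^{N+1}) for every N. *)

From Pilot Require Import Defs.
From Stdlib Require Import Reals Lra Lia Psatz ClassicalEpsilon.
From Coquelicot Require Import Coquelicot.
Open Scope R_scope.

Lemma Defs_RInt_eq f a b : ex_RInt f a b -> Defs.RInt f a b = RInt f a b.
Proof.
  intros Hf. unfold Defs.RInt.
  destruct excluded_middle_informative as [Hin|Hnot].
  - symmetry. apply RInt_Reals.
  - exfalso. apply Hnot. constructor. now apply ex_RInt_Reals_0.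
Qed.

Lemma RInt_minusR (f g : R -> R) a b : ex_RInt f a b -> ex_RInt g a b ->
  RInt (fun v => f v - g v) a b = RInt f a b - RInt g a b.
Proof. exact (RInt_minus (V:=R_CompleteNormedModule) f g a b). Qed.

Lemma RInt_scalR (f : R -> R) c a b : ex_RInt f a b ->
  RInt (fun v => c * f v) a b = c * RInt f a b.
Proof. intros Hf. exact (RInt_scal (V:=R_CompleteNormedModule) f a b c Hf). Qed.

Lemma RInt_constR c a b : RInt (fun _ => c) a b = (b - a) * c.
Proof. exact (RInt_const (V:=R_CompleteNormedModule) a b c). Qed.

Lemma ex_RInt_minusR (f g : R -> R) a b : ex_RInt f a b -> ex_RInt g a b ->
  ex_RInt (fun v => f v - g v) a b.
Proof. exact (ex_RInt_minus (V:=R_NormedModule) f g a b). Qed.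

Lemma ex_RInt_scalR (f : R -> R) c a b : ex_RInt f a b -> ex_RInt (fun v => c * f v) a b.
Proof. intros Hf. exact (ex_RInt_scal (V:=R_NormedModule) f a b c Hf). Qed.

Lemma exp_neg_mul_exp w : exp (- w) * exp w = 1.
Proof. rewrite <- exp_plus, Rplus_opp_l. apply exp_0. Qed.

Lemma exp_neg_mul_one_plus_le w : 0 <= w -> exp (- w) * (1 + w) <= 1.
Proof.
  intros Hw. pose proof (exp_ineq1_le w). pose proof (exp_neg_mul_exp w).
  pose proof (exp_pos (- w)). nra.
Qed.

(* w^2 e^{-w} <= 4, from 1 + w/2 <= e^{w/2}. *)
Lemma sqr_mul_exp_neg_le w : 0 <= w -> w ^ 2 * exp (- w) <= 4.
Proof.
  intros Hw. pose proof (exp_ineq1_le (w / 2)).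
  assert (Hsplit : exp w = exp (w / 2) * exp (w / 2)) by (rewrite <- exp_plus; f_equal; field).
  pose proof (exp_neg_mul_exp w). pose proof (exp_pos (- w)). pose proof (exp_pos (w / 2)).
  assert (w ^ 2 <= 4 * exp w) by nra. nra.
Qed.

(* (1 - e^{-w}) (1 + w) <= 2 w: the defect 1 - e^{-w} is at most min(w, 1). *)
Lemma one_minus_exp_neg_le w : 0 <= w -> (1 - exp (- w)) * (1 + w) <= 2 * w.
Proof.
  intros Hw. pose proof (exp_ineq1_le (- w)). pose proof (exp_pos (- w)).
  destruct (Rle_lt_dec w 1); nra.
Qed.

Lemma exp_nat_mul (N : nat) x : exp (INR N * x) = exp x ^ N.
Proof.
  induction N as [|N IH].
  - simpl. rewrite Rmult_0_l. apply exp_0.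
  - rewrite S_INR, Rmult_plus_distr_r, Rmult_1_l, exp_plus, IH. simpl. ring.
Qed.

(* e^{-1/t} = O(t^N) for every N: e^{1/t} = (e^{1/(Nt)})^N >= (1/(Nt))^N. *)
Lemma exp_neg_inv_le_pow (N : nat) t : 0 < t -> exp (- (1 / t)) <= INR N ^ N * t ^ N.
Proof.
  intros Ht. destruct N as [|N'].
  - simpl. assert (Hlt : exp (- (1 / t)) < exp 0).
    { apply exp_increasing. assert (0 < 1 / t) by (apply Rdiv_lt_0_compat; lra). lra. }
    rewrite exp_0 in Hlt. lra.
  - set (N := S N'). assert (HN : 0 < INR N) by (apply lt_0_INR; unfold N; lia).
    set (u := 1 / (INR N * t)).
    assert (Hu : 0 < u) by (unfold u; apply Rdiv_lt_0_compat; nra).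
    assert (Hpow : exp (1 / t) = exp u ^ N).
    { rewrite <- exp_nat_mul. f_equal. unfold u. field. lra. }
    assert (Hlow : u ^ N <= exp (1 / t)).
    { rewrite Hpow. apply pow_incr. pose proof (exp_ineq1_le u). lra. }
    assert (Hone : u ^ N * (INR N * t) ^ N = 1).
    { rewrite <- Rpow_mult_distr. unfold u.
      replace (1 / (INR N * t) * (INR N * t)) with 1 by (field; lra). apply pow1. }
    pose proof (exp_neg_mul_exp (1 / t)).
    assert (0 < (INR N * t) ^ N) by (apply pow_lt; nra).
    assert (0 < u ^ N) by (apply pow_lt; lra).
    pose proof (exp_pos (- (1 / t))).
    rewrite <- Rpow_mult_distr. nra.
Qed.

Lemma ln_one_plus_pow4_le u : 0 < u -> ln (1 + u ^ 4) <= 4 * u.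
Proof.
  intros Hu.
  assert (Hle : ln (1 + u ^ 4) <= ln ((1 + u) ^ 4)).
  { apply ln_le. pose proof (pow_lt u 4 Hu). lra. nra. }
  rewrite ln_pow in Hle by lra. simpl INR in Hle.
  assert (ln (1 + u) <= u).
  { rewrite <- (ln_exp u) at 2. apply ln_le. lra. pose proof (exp_ineq1_le u). lra. }
  lra.
Qed.

Lemma lipschitz_of_derive_bound f df lo hi M :
  (forall z, lo <= z <= hi -> is_derive f z (df z)) ->
  (forall z, lo <= z <= hi -> Rabs (df z) <= M) ->
  forall x y, lo <= x <= hi -> lo <= y <= hi -> Rabs (f y - f x) <= M * Rabs (y - x).
Proof.
  intros Hd Hb x y Hx Hy.
  assert (Hin : forall z, Rmin x y <= z <= Rmax x y -> lo <= z <= hi).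
  { intros z Hz. unfold Rmin, Rmax in Hz. destruct (Rle_dec x y); lra. }
  destruct (MVT_gen f x y df) as [c [Hc ->]].
  - intros z Hz. apply Hd, Hin. lra.
  - intros z Hz. apply continuity_pt_filterlim, (ex_derive_continuous (V:=R_NormedModule)).
    exists (df z). apply Hd, Hin. lra.
  - rewrite Rabs_mult. apply Rmult_le_compat_r; [apply Rabs_pos|]. apply Hb, Hin, Hc.
Qed.

(* Second-order Taylor bound: |f y - f x - (y - x) f' x| <= M (y - x)^2 when |f''| <= M,
   obtained by applying the Lipschitz bound to f z - z f' x. *)
Lemma taylor2_remainder_bound f df d2f lo hi M :
  (forall z, lo <= z <= hi -> is_derive f z (df z)) ->
  (forall z, lo <= z <= hi -> is_derive df z (d2f z)) ->
  (forall z, lo <= z <= hi -> Rabs (d2f z) <= M) ->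
  forall x y, lo <= x <= hi -> lo <= y <= hi ->
  Rabs (f y - f x - (y - x) * df x) <= M * (y - x) ^ 2.
Proof.
  intros Hf Hdf Hb x y Hx Hy.
  set (lo' := Rmin x y). set (hi' := Rmax x y).
  assert (Hin : forall z, lo' <= z <= hi' -> lo <= z <= hi).
  { intros z Hz. unfold lo', hi', Rmin, Rmax in Hz. destruct (Rle_dec x y); lra. }
  assert (Hxy : lo' <= x <= hi' /\ lo' <= y <= hi').
  { unfold lo', hi', Rmin, Rmax. destruct (Rle_dec x y); lra. }
  assert (HM : 0 <= M) by (pose proof (Hb x Hx); pose proof (Rabs_pos (d2f x)); lra).
  replace (f y - f x - (y - x) * df x) with ((f y - y * df x) - (f x - x * df x)) by ring.
  replace (M * (y - x) ^ 2) with (M * Rabs (y - x) * Rabs (y - x))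
    by (rewrite <- (pow2_abs (y - x)); ring).
  apply (lipschitz_of_derive_bound (fun z => f z - z * df x) (fun z => df z - df x) lo' hi');
    try tauto.
  - intros z Hz. apply (is_derive_minus (fun z => f z) (fun z => z * df x)).
    + apply Hf, Hin, Hz.
    + auto_derive; [trivial | ring].
  - intros z Hz.
    eapply Rle_trans; [apply (lipschitz_of_derive_bound df d2f lo hi M); auto|].
    apply Rmult_le_compat_l; auto.
    unfold lo', hi', Rmin, Rmax in Hz. destruct (Rle_dec x y);
      unfold Rabs; repeat destruct Rcase_abs; lra.
Qed.

Lemma is_derive_of_remainder_bound F y l r C : 0 < r -> 0 <= C ->
  (forall h, h <> 0 -> Rabs h < r ->
     Rabs (F (y + h) - F y - h * l) <= C * Rabs h * sqrt (Rabs h)) ->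
  is_derive F y l.
Proof.
  intros Hr HC Hrem. apply is_derive_Reals. intros eps Heps.
  set (e := eps / (C + 1)).
  assert (He : 0 < e) by (unfold e; apply Rdiv_lt_0_compat; lra).
  assert (Hd : 0 < Rmin r (e ^ 2)) by (apply Rmin_pos; nra).
  exists (mkposreal _ Hd). intros h Hh0 Hh. simpl in Hh.
  assert (Hhr : Rabs h < r) by (eapply Rlt_le_trans; [apply Hh | apply Rmin_l]).
  assert (Hhe : Rabs h < e ^ 2) by (eapply Rlt_le_trans; [apply Hh | apply Rmin_r]).
  assert (Hs : sqrt (Rabs h) < e).
  { rewrite <- (sqrt_pow2 e) by lra. apply sqrt_lt_1_alt. split; [apply Rabs_pos | exact Hhe]. }
  assert (Ha : 0 < Rabs h) by (apply Rabs_pos_lt; exact Hh0).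
  assert (HCs : C * sqrt (Rabs h) < eps).
  { pose proof (sqrt_pos (Rabs h)).
    apply Rle_lt_trans with ((C + 1) * sqrt (Rabs h)); [nra|].
    replace eps with ((C + 1) * e) by (unfold e; field; lra). nra. }
  replace ((F (y + h) - F y) / h - l) with ((F (y + h) - F y - h * l) / h) by (field; exact Hh0).
  unfold Rdiv. rewrite Rabs_mult, Rabs_inv.
  apply (Rmult_lt_reg_r (Rabs h)); [exact Ha|].
  rewrite Rmult_assoc, Rinv_l, Rmult_1_r by lra.
  pose proof (Hrem h Hh0 Hhr). nra.
Qed.

Lemma continuity_of_sqrt_bound F y r C : 0 < r -> 0 <= C ->
  (forall h, Rabs h < r -> Rabs (F (y + h) - F y) <= C * sqrt (Rabs h)) ->
  continuity_pt F y.
Proof.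
  intros Hr HC Hbound eps Heps.
  set (e := eps / (C + 1)).
  assert (He : 0 < e) by (unfold e; apply Rdiv_lt_0_compat; lra).
  exists (Rmin r (e ^ 2)). split; [apply Rmin_pos; nra|].
  intros x [_ Hx]. simpl in Hx. unfold R_dist in *.
  replace x with (y + (x - y)) by ring. set (h := x - y) in *.
  assert (Hhr : Rabs h < r) by (eapply Rlt_le_trans; [apply Hx | apply Rmin_l]).
  assert (Hhe : Rabs h < e ^ 2) by (eapply Rlt_le_trans; [apply Hx | apply Rmin_r]).
  assert (Hs : sqrt (Rabs h) < e).
  { rewrite <- (sqrt_pow2 e) by lra. apply sqrt_lt_1_alt. split; [apply Rabs_pos | exact Hhe]. }
  pose proof (sqrt_pos (Rabs h)). pose proof (Hbound h Hhr).
  change (Rabs (F (y + h) - F y) < eps).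
  replace eps with ((C + 1) * e) by (unfold e; field; lra). nra.
Qed.

Lemma le_sqrt_of_le_1 x : 0 <= x <= 1 -> x <= sqrt x.
Proof.
  intros Hx. pose proof (sqrt_sqrt x (proj1 Hx)). pose proof (sqrt_pos x).
  assert (sqrt x <= 1) by (rewrite <- sqrt_1; apply sqrt_le_1_alt; lra). nra.
Qed.

(* A function continuous on (a, b) that vanishes linearly at both ends is Riemann integrable
   on [a, b]: its extension by 0 outside (a, b) is continuous on [a, b]. *)
Lemma ex_RInt_of_vanishing_ends (f : R -> R) a b K : a < b -> 0 <= K ->
  (forall v, a < v < b -> continuous f v) ->
  (forall v, a < v < b -> Rabs (f v) <= K * (v - a) /\ Rabs (f v) <= K * (b - v)) ->
  ex_RInt f a b.
Proof.
  intros Hab HK Hcont Hends.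
  set (g := fun v => if Rlt_dec a v then if Rlt_dec v b then f v else 0 else 0).
  assert (Hg : forall v, a < v < b -> g v = f v).
  { intros v Hv. unfold g. repeat destruct Rlt_dec; lra. }
  assert (Hgout : forall v, ~ (a < v < b) -> g v = 0).
  { intros v Hv. unfold g. repeat destruct Rlt_dec; lra. }
  assert (Hlin : forall v, Rabs (g v) <= K * Rabs (v - a) /\ Rabs (g v) <= K * Rabs (v - b)).
  { intros v. destruct (Rlt_dec a v); [destruct (Rlt_dec v b)|].
    - rewrite Hg, (Rabs_right (v - a)), (Rabs_left (v - b)) by lra.
      destruct (Hends v); [lra|]. split; lra.
    - rewrite Hgout, Rabs_R0 by lra. split; apply Rmult_le_pos; auto; apply Rabs_pos.
    - rewrite Hgout, Rabs_R0 by lra. split; apply Rmult_le_pos; auto; apply Rabs_pos. }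
  assert (Hendpoint : forall c, g c = 0 -> (forall v, Rabs (g v) <= K * Rabs (v - c)) ->
    continuous g c).
  { intros c Hc Hbd. apply continuity_pt_filterlim.
    apply (continuity_of_sqrt_bound g c 1 K); [lra | exact HK|].
    intros h Hh. rewrite Hc, Rminus_0_r.
    replace h with (c + h - c) at 2 by ring.
    eapply Rle_trans; [apply Hbd|]. apply Rmult_le_compat_l; [exact HK|].
    replace (c + h - c) with h by ring. apply le_sqrt_of_le_1. split; [apply Rabs_pos | lra]. }
  apply (ex_RInt_ext g). { rewrite Rmin_left, Rmax_right by lra. exact Hg. }
  apply (ex_RInt_continuous (V:=R_CompleteNormedModule)).
  rewrite Rmin_left, Rmax_right by lra. intros z Hz.
  destruct (Req_dec z a) as [->|Hza].
  { apply Hendpoint; [apply Hgout; lra | intros v; apply Hlin]. }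
  destruct (Req_dec z b) as [->|Hzb].
  { apply Hendpoint; [apply Hgout; lra | intros v; apply Hlin]. }
  apply (continuous_ext_loc g f z).
  - apply (locally_interval _ z (Finite a) (Finite b)); simpl; try lra.
    intros y Hy1 Hy2. symmetry. apply Hg. lra.
  - apply Hcont. lra.
Qed.

Lemma abs_RInt_le_of_dominated (f g : R -> R) a b : a <= b -> ex_RInt f a b -> ex_RInt g a b ->
  (forall x, a < x < b -> Rabs (f x) <= g x) -> Rabs (RInt f a b) <= RInt g a b.
Proof.
  intros Hab Hf Hg Hdom. apply Rabs_le. split.
  - replace (- RInt g a b) with (RInt (fun x => -1 * g x) a b) by (rewrite RInt_scalR; auto; lra).
    apply RInt_le; auto; [apply ex_RInt_scalR; auto|].
    intros x Hx. pose proof (Hdom x Hx). pose proof (Rabs_pos (f x)).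
    unfold Rabs in *; destruct Rcase_abs; lra.
  - apply RInt_le; auto. intros x Hx. pose proof (Hdom x Hx). pose proof (Rle_abs (f x)). lra.
Qed.

(* The integral of 1/(4 v (t - v) + c) over [0, t] grows only logarithmically as c -> 0:
   split the integrand at t/2 and integrate the two resulting hyperbolas. *)
Lemma inv_quadratic_le_sum t c v : 0 < t -> 0 < c -> 0 <= v <= t ->
  1 / (4 * v * (t - v) + c) <= 1 / (2 * t * v + c) + 1 / (2 * t * (t - v) + c).
Proof.
  intros Ht Hc Hv. unfold Rdiv. rewrite !Rmult_1_l.
  assert (0 < / (2 * t * v + c)) by (apply Rinv_0_lt_compat; nra).
  assert (0 < / (2 * t * (t - v) + c)) by (apply Rinv_0_lt_compat; nra).
  destruct (Rle_lt_dec v (t / 2)).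
  - assert (/ (4 * v * (t - v) + c) <= / (2 * t * v + c)) by (apply Rinv_le_contravar; nra). lra.
  - assert (/ (4 * v * (t - v) + c) <= / (2 * t * (t - v) + c)) by (apply Rinv_le_contravar; nra).
    lra.
Qed.

Lemma ex_RInt_inv_quadratic t c : 0 < t -> 0 < c ->
  ex_RInt (fun v => 1 / (4 * v * (t - v) + c)) 0 t.
Proof.
  intros Ht Hc. apply (ex_RInt_continuous (V:=R_CompleteNormedModule)).
  rewrite Rmin_left, Rmax_right by lra. intros z Hz.
  apply (ex_derive_continuous (V:=R_NormedModule)). auto_derive. nra.
Qed.

Lemma RInt_inv_quadratic_le t c : 0 < t -> 0 < c ->
  RInt (fun v => 1 / (4 * v * (t - v) + c)) 0 t <= (ln (2 * t ^ 2 + c) - ln c) / t.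
Proof.
  intros Ht Hc.
  set (g := fun v => 1 / (2 * t * v + c) + 1 / (2 * t * (t - v) + c)).
  set (P := fun v => (ln (2 * t * v + c) - ln (2 * t * (t - v) + c)) / (2 * t)).
  assert (HP : is_RInt g 0 t (minus (P t) (P 0))).
  { apply (is_RInt_derive (V:=R_CompleteNormedModule)); rewrite Rmin_left, Rmax_right by lra.
    - intros z Hz. unfold P, g. auto_derive; [repeat split; nra | field; split; nra].
    - intros z Hz. apply (ex_derive_continuous (V:=R_NormedModule)). unfold g.
      auto_derive. split; nra. }
  apply Rle_trans with (RInt g 0 t).
  - apply RInt_le; [lra | apply ex_RInt_inv_quadratic; lra | eexists; exact HP |].
    intros v Hv. apply inv_quadratic_le_sum; lra.
  - rewrite (is_RInt_unique g 0 t _ HP). unfold minus, plus, opp; simpl. unfold P.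
    replace (2 * t * t + c) with (2 * t ^ 2 + c) by ring.
    replace (2 * t * (t - 0) + c) with (2 * t ^ 2 + c) by ring.
    replace (2 * t * 0 + c) with c by ring. replace (2 * t * (t - t) + c) with c by ring.
    replace (2 * (t * (t * 1)) + c) with (2 * t ^ 2 + c) by ring. apply Req_le. field. lra.
Qed.

(* The constant in the bound |y| * int_0^t dv / (4 v (t - v) + y^2 t) <= K_t sqrt |y|. *)
Definition hoelder_const (t : R) : R := 4 * sqrt (sqrt (2 * t)) / t.

Lemma hoelder_const_nonneg t : 0 < t -> 0 <= hoelder_const t.
Proof.
  intros Ht. unfold hoelder_const.
  apply Rmult_le_pos; [apply Rmult_le_pos; [lra | apply sqrt_pos]|].
  left. apply Rinv_0_lt_compat. lra.
Qed.

(* |y| * log (1 + 2 t / y^2) / t <= K_t sqrt |y|: apply ln (1 + u^4) <= 4 u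
   to u = (2 t)^{1/4} / sqrt |y|. *)
Lemma abs_mul_RInt_inv_quadratic_le t y : 0 < t -> y <> 0 ->
  Rabs y * RInt (fun v => 1 / (4 * v * (t - v) + y ^ 2 * t)) 0 t
    <= hoelder_const t * sqrt (Rabs y).
Proof.
  intros Ht Hy.
  assert (HY : 0 < Rabs y) by (apply Rabs_pos_lt; auto).
  set (r := sqrt (Rabs y)). set (s := sqrt (sqrt (2 * t))).
  assert (Hr : 0 < r) by (apply sqrt_lt_R0; auto).
  assert (Hs : 0 < s) by (apply sqrt_lt_R0, sqrt_lt_R0; lra).
  assert (Hr2 : r * r = Rabs y) by (apply sqrt_sqrt; lra).
  assert (Hs2 : s * s = sqrt (2 * t)) by (apply sqrt_sqrt, sqrt_pos).
  assert (Hs4 : sqrt (2 * t) * sqrt (2 * t) = 2 * t) by (apply sqrt_sqrt; lra).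
  assert (Hy2 : y ^ 2 = (r * r) * (r * r)) by (rewrite Hr2, <- pow2_abs; ring).
  assert (Hc : 0 < y ^ 2 * t) by (rewrite Hy2; apply Rmult_lt_0_compat; [nra | lra]).
  set (u := s / r).
  assert (Hu : 0 < u) by (apply Rdiv_lt_0_compat; auto).
  assert (Hratio : (2 * t ^ 2 + y ^ 2 * t) / (y ^ 2 * t) = 1 + u ^ 4).
  { transitivity (1 + 2 * t / y ^ 2); [field; split; lra|].
    rewrite <- Hs4, <- Hs2, Hy2. unfold u. field. lra. }
  eapply Rle_trans.
  { apply Rmult_le_compat_l; [apply Rabs_pos | apply RInt_inv_quadratic_le; auto]. }
  rewrite <- ln_div, Hratio by nra.
  pose proof (ln_one_plus_pow4_le u Hu).
  rewrite <- Hr2. apply Rle_trans with (r * r * (4 * u / t)).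
  - apply Rmult_le_compat_l; [nra|]. unfold Rdiv.
    apply Rmult_le_compat_r; [left; apply Rinv_0_lt_compat; lra | lra].
  - unfold u, hoelder_const. fold s r. right. field. split; lra.
Qed.

Section TimeKernel.

Variable t : R.
Hypothesis t_pos : 0 < t.

(* For 0 < v < t, N'E_+(y, t - v) N'E_+(y, v) = y alpha(v)/t exp(-y^2 alpha(v)) with
   alpha(v) = t / (4 v (t - v)) = 1/(4 v) + 1/(4 (t - v)).  At v = 0 and v = t the
   division by zero makes alpha vanish, so every bound below that only needs
   alpha >= 0 holds on the closed interval [0, t]. *)
Definition alpha (v : R) : R := t / (4 * v * (t - v)).

(* kappa y v = exp(-y^2 alpha v) and its y-derivative -2 t gamma y v, where gamma y v is
   the integrand of the time convolution at the point x = y; dgamma is d gamma / dy. *)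
Definition kappa (y v : R) : R := exp (- (y ^ 2 * alpha v)).
Definition gamma (y v : R) : R := y * alpha v / t * kappa y v.
Definition dgamma (y v : R) : R := alpha v / t * kappa y v * (1 - 2 * y ^ 2 * alpha v).

Lemma alpha_nonneg v : 0 <= v <= t -> 0 <= alpha v.
Proof.
  intros Hv. unfold alpha.
  destruct (Req_dec v 0) as [->|Hv0]; [rewrite Rmult_0_r, Rmult_0_l, Rdiv_0_r; lra|].
  destruct (Req_dec v t) as [->|Hvt]; [rewrite Rminus_diag, Rmult_0_r, Rdiv_0_r; lra|].
  apply Rlt_le, Rdiv_lt_0_compat; nra.
Qed.

Lemma alpha_interior v : 0 < v < t ->
  0 < alpha v /\ alpha v * (4 * v * (t - v)) = t /\
  4 * v * (t - v) <= 4 * v * t /\ 4 * v * (t - v) <= 4 * (t - v) * t.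
Proof.
  intros Hv. assert (0 < 4 * v * (t - v)) by nra. unfold alpha.
  split; [apply Rdiv_lt_0_compat; lra|]. split; [field; nra|]. split; nra.
Qed.

Lemma kappa_pos y v : 0 < kappa y v.
Proof. apply exp_pos. Qed.

(* On [0, t] alpha and kappa are nonnegative, so only the factor y carries a sign. *)
Lemma abs_gamma y v : 0 <= v <= t -> Rabs (gamma y v) = Rabs y * (alpha v * kappa y v / t).
Proof.
  intros Hv. pose proof (alpha_nonneg v Hv). pose proof (kappa_pos y v).
  unfold gamma, Rdiv. rewrite !Rabs_mult, (Rabs_right (alpha v)), (Rabs_right (kappa y v)),
    (Rabs_right (/ t)); [ring | | lra | lra].
  apply Rle_ge, Rlt_le, Rinv_0_lt_compat. lra.
Qed.

Lemma NEp_product_eq x v : 0 <= x -> 0 < v < t -> NEp x (t - v) * NEp x v = gamma x v.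
Proof.
  intros Hx Hv. unfold NEp, gamma, kappa, alpha.
  destruct (Rlt_dec 0 v); [|lra]. destruct (Rlt_dec 0 (t - v)); [|lra].
  replace (sqrt x / (2 * (t - v)) * exp (- x ^ 2 / (4 * (t - v))) *
           (sqrt x / (2 * v) * exp (- x ^ 2 / (4 * v))))
    with (sqrt x * sqrt x / (4 * v * (t - v)) *
          (exp (- x ^ 2 / (4 * (t - v))) * exp (- x ^ 2 / (4 * v)))) by (field; lra).
  rewrite sqrt_sqrt, <- exp_plus by lra.
  replace (- x ^ 2 / (4 * (t - v)) + - x ^ 2 / (4 * v))
    with (- (x ^ 2 * (t / (4 * v * (t - v))))) by (field; lra).
  field. lra.
Qed.

(* d kappa / dy = -2 t gamma: the identity that turns the x-integral into a boundary term. *)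
Lemma is_derive_kappa y v : is_derive (fun z => kappa z v) y (-2 * t * gamma y v).
Proof.
  unfold gamma, kappa. auto_derive; [trivial|].
  replace (y * (y * 1)) with (y ^ 2) by ring. field. lra.
Qed.

Lemma is_derive_gamma y v : is_derive (fun z => gamma z v) y (dgamma y v).
Proof.
  unfold gamma, dgamma, kappa. auto_derive; [trivial|].
  replace (y * (y * 1)) with (y ^ 2) by ring. field. lra.
Qed.

(* |dgamma y v| <= 9 / (t y^2) uniformly in v: with w = y^2 alpha v,
   t y^2 |dgamma y v| <= w e^{-w} + 2 w^2 e^{-w}. *)
Lemma dgamma_bound y v : 0 <= v <= t -> y <> 0 -> Rabs (dgamma y v) <= 9 / (t * y ^ 2).
Proof.
  intros Hv Hy. pose proof (alpha_nonneg v Hv) as Ha.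
  assert (Hy2 : 0 < y ^ 2) by (apply pow2_gt_0; auto).
  unfold dgamma, kappa. set (a := alpha v) in *. set (w := y ^ 2 * a).
  assert (Hw : 0 <= w) by (unfold w; nra).
  set (E := exp (- w)). pose proof (exp_pos (- w)) as HE. fold E in HE.
  pose proof (exp_neg_mul_one_plus_le w Hw) as Hlin. pose proof (sqr_mul_exp_neg_le w Hw) as Hsq.
  fold E in Hlin, Hsq.
  assert (Hnn : 0 <= a / t * E) by (apply Rmult_le_pos; [apply Rdiv_le_0_compat|]; lra).
  rewrite Rabs_mult, (Rabs_right (a / t * E)) by lra.
  apply Rle_trans with (a / t * E * (1 + 2 * w)).
  { apply Rmult_le_compat_l; [exact Hnn|]. unfold w. unfold Rabs; destruct Rcase_abs; nra. }
  apply (Rmult_le_reg_r (t * y ^ 2)); [nra|].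
  replace (a / t * E * (1 + 2 * w) * (t * y ^ 2)) with (w * E + 2 * (w ^ 2 * E))
    by (unfold w; field; lra).
  replace (9 / (t * y ^ 2) * (t * y ^ 2)) with 9 by (field; lra). nra.
Qed.

Lemma kappa_vanishing_ends y v : 0 < v < t -> y <> 0 ->
  Rabs (kappa y v) <= 4 / y ^ 2 * v /\ Rabs (kappa y v) <= 4 / y ^ 2 * (t - v).
Proof.
  intros Hv Hy. destruct (alpha_interior v Hv) as (Ha & Haq & Hq1 & Hq2).
  assert (Hy2 : 0 < y ^ 2) by (apply pow2_gt_0; auto).
  pose proof (exp_neg_mul_one_plus_le (y ^ 2 * alpha v) ltac:(nra)).
  pose proof (kappa_pos y v).
  unfold kappa in *. set (a := alpha v) in *. set (E := exp (- (y ^ 2 * a))) in *.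
  rewrite Rabs_right by lra.
  assert (HEt : E * y ^ 2 * t <= 4 * v * (t - v)).
  { rewrite <- Haq at 1. assert (0 < 4 * v * (t - v)) by nra. nra. }
  split; apply (Rmult_le_reg_r (y ^ 2 * t)); try nra.
  - replace (4 / y ^ 2 * v * (y ^ 2 * t)) with (4 * v * t) by (field; lra). nra.
  - replace (4 / y ^ 2 * (t - v) * (y ^ 2 * t)) with (4 * (t - v) * t) by (field; lra). nra.
Qed.

Lemma gamma_vanishing_ends y v : 0 < v < t -> y <> 0 ->
  Rabs (gamma y v) <= 16 / (t * Rabs y ^ 3) * v /\
  Rabs (gamma y v) <= 16 / (t * Rabs y ^ 3) * (t - v).
Proof.
  intros Hv Hy. destruct (alpha_interior v Hv) as (Ha & Haq & Hq1 & Hq2).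
  assert (HY : 0 < Rabs y) by (apply Rabs_pos_lt; auto).
  pose proof (sqr_mul_exp_neg_le (y ^ 2 * alpha v) ltac:(nra)) as Hsq.
  pose proof (kappa_pos y v).
  rewrite abs_gamma by lra.
  unfold kappa in *. set (a := alpha v) in *. set (E := exp (- (y ^ 2 * a))) in *.
  rewrite <- (pow2_abs y) in Hsq. set (Y := Rabs y) in *.
  assert (Hq : (Y ^ 2) ^ 2 * a * E * t <= 4 * (4 * v * (t - v))).
  { rewrite <- Haq at 1.
    replace ((Y ^ 2) ^ 2 * a * E * (a * (4 * v * (t - v))))
      with ((Y ^ 2 * a) ^ 2 * E * (4 * v * (t - v))) by ring.
    apply Rmult_le_compat_r; nra. }
  assert (HY3 : 0 < t * Y ^ 3) by (apply Rmult_lt_0_compat; [lra | apply pow_lt; lra]).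
  split; apply (Rmult_le_reg_r (t * Y ^ 3)); auto;
    replace (Y * (a * E / t) * (t * Y ^ 3)) with ((Y ^ 2) ^ 2 * a * E) by (field; lra);
    apply (Rmult_le_reg_r t); try lra.
  - replace (16 / (t * Y ^ 3) * v * (t * Y ^ 3) * t) with (16 * v * t) by (field; lra). nra.
  - replace (16 / (t * Y ^ 3) * (t - v) * (t * Y ^ 3) * t) with (16 * (t - v) * t)
      by (field; lra). nra.
Qed.

Lemma kappa_integrable y : ex_RInt (kappa y) 0 t.
Proof.
  destruct (Req_dec y 0) as [->|Hy].
  - apply (ex_RInt_ext (fun _ => 1)); [|apply ex_RInt_const].
    intros v _. unfold kappa. rewrite pow_i, Rmult_0_l, Ropp_0, exp_0 by lia. reflexivity.
  - apply (ex_RInt_of_vanishing_ends _ 0 t (4 / y ^ 2)); [lra | | |].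
    + apply Rlt_le, Rdiv_lt_0_compat; [lra | apply pow2_gt_0; auto].
    + intros v Hv. apply (ex_derive_continuous (V:=R_NormedModule)).
      unfold kappa, alpha. auto_derive. nra.
    + intros v Hv. rewrite !Rminus_0_r. apply kappa_vanishing_ends; auto.
Qed.

Lemma gamma_integrable y : ex_RInt (gamma y) 0 t.
Proof.
  destruct (Req_dec y 0) as [->|Hy].
  - apply (ex_RInt_ext (fun _ => 0)); [|apply ex_RInt_const].
    intros v _. unfold gamma, Rdiv. rewrite !Rmult_0_l. reflexivity.
  - apply (ex_RInt_of_vanishing_ends _ 0 t (16 / (t * Rabs y ^ 3))); [lra | | |].
    + apply Rlt_le, Rdiv_lt_0_compat; [lra|].
      apply Rmult_lt_0_compat; [lra | apply pow_lt, Rabs_pos_lt; auto].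
    + intros v Hv. apply (ex_derive_continuous (V:=R_NormedModule)).
      unfold gamma, kappa, alpha. auto_derive. nra.
    + intros v Hv. rewrite !Rminus_0_r. apply gamma_vanishing_ends; auto.
Qed.

Lemma gamma_dominated y v : 0 < v < t ->
  Rabs (gamma y v) <= Rabs y * (1 / (4 * v * (t - v) + y ^ 2 * t)).
Proof.
  intros Hv. destruct (alpha_interior v Hv) as (Ha & Haq & _ & _).
  assert (Hy2 : 0 <= y ^ 2) by apply pow2_ge_0.
  pose proof (exp_neg_mul_one_plus_le (y ^ 2 * alpha v) ltac:(nra)).
  pose proof (kappa_pos y v).
  rewrite abs_gamma by lra. apply Rmult_le_compat_l; [apply Rabs_pos|].
  unfold kappa in *. set (a := alpha v) in *. set (E := exp (- (y ^ 2 * a))) in *.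
  set (q := 4 * v * (t - v)) in *.
  assert (Hq : 0 < q) by (unfold q; nra).
  apply (Rmult_le_reg_r (t * (q + y ^ 2 * t))); [nra|].
  replace (1 / (q + y ^ 2 * t) * (t * (q + y ^ 2 * t))) with t by (field; nra).
  replace (a * E / t * (t * (q + y ^ 2 * t))) with (E * (a * q) + t * E * (y ^ 2 * a))
    by (field; nra).
  rewrite Haq. nra.
Qed.

Lemma one_minus_kappa_dominated y v : 0 < v < t ->
  0 <= 1 - kappa y v <= 2 * y ^ 2 * t * (1 / (4 * v * (t - v) + y ^ 2 * t)).
Proof.
  intros Hv. destruct (alpha_interior v Hv) as (Ha & Haq & _ & _).
  assert (Hy2 : 0 <= y ^ 2) by apply pow2_ge_0.
  assert (Hw : 0 <= y ^ 2 * alpha v) by nra.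
  pose proof (one_minus_exp_neg_le _ Hw). pose proof (exp_neg_mul_one_plus_le _ Hw).
  unfold kappa. set (a := alpha v) in *. set (E := exp (- (y ^ 2 * a))) in *.
  set (q := 4 * v * (t - v)) in *.
  assert (Hq : 0 < q) by (unfold q; nra).
  split; [nra|].
  apply (Rmult_le_reg_r (a * (q + y ^ 2 * t))); [nra|].
  replace (2 * y ^ 2 * t * (1 / (q + y ^ 2 * t)) * (a * (q + y ^ 2 * t)))
    with (2 * (y ^ 2 * a) * t) by (field; nra).
  replace ((1 - E) * (a * (q + y ^ 2 * t))) with ((1 - E) * (a * q + y ^ 2 * a * t)) by ring.
  rewrite Haq. nra.
Qed.

(* At x = 1, alpha >= 1/t makes the kernel exponentially small in 1/t. *)
Lemma kappa_one_le v : 0 < v < t -> kappa 1 v <= exp (- (1 / t)).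
Proof.
  intros Hv. destruct (alpha_interior v Hv) as (Ha & Haq & _ & _).
  assert (Halpha : 1 / t <= alpha v).
  { apply (Rmult_le_reg_r (t * t)); [nra|].
    replace (1 / t * (t * t)) with t by (field; lra).
    rewrite <- Haq at 1. apply Rmult_le_compat_l; [lra|].
    pose proof (pow2_ge_0 (t - 2 * v)). nra. }
  unfold kappa. rewrite pow1, Rmult_1_l.
  destruct (Rle_lt_or_eq_dec _ _ Halpha) as [Hlt | ->]; [|lra].
  left. apply exp_increasing. lra.
Qed.

Lemma dgamma_window_bound y z v : 0 < y -> y / 2 <= z <= 3 * y / 2 -> 0 <= v <= t ->
  Rabs (dgamma z v) <= 36 / (t * y ^ 2).
Proof.
  intros Hy Hz Hv. eapply Rle_trans; [apply dgamma_bound; [exact Hv | lra]|].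
  assert (Hz2 : 0 < z ^ 2) by (apply pow2_gt_0; lra).
  assert (Hy2 : 0 < y ^ 2) by (apply pow2_gt_0; lra).
  assert (y ^ 2 <= 4 * z ^ 2) by nra.
  apply (Rmult_le_reg_r (t * z ^ 2 * y ^ 2)); [apply Rmult_lt_0_compat; nra|].
  replace (9 / (t * z ^ 2) * (t * z ^ 2 * y ^ 2)) with (9 * y ^ 2) by (field; lra).
  replace (36 / (t * y ^ 2) * (t * z ^ 2 * y ^ 2)) with (36 * z ^ 2) by (field; lra). nra.
Qed.

Lemma kappa_taylor_bound y h v : 0 < y -> - (y / 2) < h < y / 2 -> 0 <= v <= t ->
  Rabs (kappa (y + h) v - kappa y v - h * (-2 * t * gamma y v)) <= 72 / y ^ 2 * h ^ 2.
Proof.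
  intros Hy Hwin Hv. replace (h ^ 2) with ((y + h - y) ^ 2) by ring.
  replace h with (y + h - y) at 2 by ring.
  apply (taylor2_remainder_bound (fun z => kappa z v) (fun z => -2 * t * gamma z v)
           (fun z => -2 * t * dgamma z v) (y / 2) (3 * y / 2)); try lra.
  - intros z _. apply is_derive_kappa.
  - intros z _. apply is_derive_scal, is_derive_gamma.
  - intros z Hz. rewrite Rabs_mult, (Rabs_left (-2 * t)) by lra.
    eapply Rle_trans; [apply Rmult_le_compat_l; [lra | apply (dgamma_window_bound y z v); auto]|].
    apply Req_le. field. assert (0 < y ^ 2) by (apply pow2_gt_0; lra). lra.
Qed.

Lemma gamma_lipschitz y h v : 0 < y -> - (y / 2) < h < y / 2 -> 0 <= v <= t ->
  Rabs (gamma (y + h) v - gamma y v) <= 36 / (t * y ^ 2) * Rabs h.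
Proof.
  intros Hy Hwin Hv. replace (Rabs h) with (Rabs (y + h - y)) by (f_equal; ring).
  apply (lipschitz_of_derive_bound (fun z => gamma z v) (fun z => dgamma z v)
           (y / 2) (3 * y / 2)); try lra.
  - intros z _. apply is_derive_gamma.
  - intros z Hz. apply dgamma_window_bound; auto.
Qed.

Definition Phi (y : R) : R := RInt (kappa y) 0 t.
Definition Gam (y : R) : R := RInt (gamma y) 0 t.

Lemma Phi_zero : Phi 0 = t.
Proof.
  unfold Phi. rewrite (RInt_ext _ (fun _ => 1)), RInt_constR; [ring|].
  intros v _. unfold kappa. rewrite pow_i, Rmult_0_l, Ropp_0, exp_0 by lia. reflexivity.
Qed.

Lemma Gam_zero : Gam 0 = 0.
Proof.
  unfold Gam. rewrite (RInt_ext _ (fun _ => 0)), RInt_constR; [ring|].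
  intros v _. unfold gamma, Rdiv. rewrite !Rmult_0_l. reflexivity.
Qed.

Lemma Gam_small y : y <> 0 -> Rabs (Gam y) <= hoelder_const t * sqrt (Rabs y).
Proof.
  intros Hy. set (D := fun v => 1 / (4 * v * (t - v) + y ^ 2 * t)).
  assert (Hc : 0 < y ^ 2 * t) by (apply Rmult_lt_0_compat; [apply pow2_gt_0; auto | lra]).
  assert (HD : ex_RInt D 0 t) by (apply ex_RInt_inv_quadratic; lra).
  eapply Rle_trans; [apply (abs_RInt_le_of_dominated _ (fun v => Rabs y * D v))|].
  - lra.
  - apply gamma_integrable.
  - apply ex_RInt_scalR, HD.
  - intros v Hv. apply gamma_dominated, Hv.
  - rewrite RInt_scalR by exact HD. apply abs_mul_RInt_inv_quadratic_le; auto.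
Qed.

(* At y = 0: 0 <= t - Phi h = O(h^2 log(1/|h|)), hence Phi' 0 = 0 = -2 t Gam 0. *)
Lemma Phi_derive_zero : is_derive Phi 0 (-2 * t * Gam 0).
Proof.
  rewrite Gam_zero, Rmult_0_r.
  apply (is_derive_of_remainder_bound Phi 0 0 1 (2 * t * hoelder_const t)); [lra | |].
  { pose proof (hoelder_const_nonneg t t_pos). nra. }
  intros h Hh _. rewrite Rplus_0_l, Rmult_0_r, Rminus_0_r, Phi_zero.
  set (D := fun v => 1 / (4 * v * (t - v) + h ^ 2 * t)).
  assert (Hc : 0 < h ^ 2 * t) by (apply Rmult_lt_0_compat; [apply pow2_gt_0; auto | lra]).
  assert (HD : ex_RInt D 0 t) by (apply ex_RInt_inv_quadratic; lra).
  assert (Hdefect : t - Phi h = RInt (fun v => 1 - kappa h v) 0 t).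
  { unfold Phi. rewrite RInt_minusR, RInt_constR;
      [ring | apply ex_RInt_const | apply kappa_integrable]. }
  rewrite <- Rabs_Ropp, Ropp_minus_distr, Hdefect.
  eapply Rle_trans; [apply (abs_RInt_le_of_dominated _ (fun v => 2 * h ^ 2 * t * D v))|].
  - lra.
  - apply ex_RInt_minusR; [apply ex_RInt_const | apply kappa_integrable].
  - apply ex_RInt_scalR, HD.
  - intros v Hv. destruct (one_minus_kappa_dominated h v Hv). unfold D. rewrite Rabs_right; lra.
  - rewrite RInt_scalR by exact HD.
    replace (2 * h ^ 2 * t * RInt D 0 t) with (2 * t * Rabs h * (Rabs h * RInt D 0 t))
      by (rewrite <- (pow2_abs h); ring).
    replace (2 * t * hoelder_const t * Rabs h * sqrt (Rabs h))
      with (2 * t * Rabs h * (hoelder_const t * sqrt (Rabs h))) by ring.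
    apply Rmult_le_compat_l; [pose proof (Rabs_pos h); nra|].
    apply abs_mul_RInt_inv_quadratic_le; auto.
Qed.

(* For y > 0, differentiation under the integral sign: integrating kappa_taylor_bound
   over [0, t] gives a remainder 72 t h^2 / y^2. *)
Lemma Phi_derive_pos y : 0 < y -> is_derive Phi y (-2 * t * Gam y).
Proof.
  intros Hy. assert (Hy2 : 0 < y ^ 2) by (apply pow2_gt_0; lra).
  apply (is_derive_of_remainder_bound Phi y _ (Rmin (y / 2) 1) (72 * t / y ^ 2));
    [apply Rmin_pos; lra | apply Rlt_le, Rdiv_lt_0_compat; lra |].
  intros h _ Hh.
  assert (Hhy : Rabs h < y / 2) by (pose proof (Rmin_l (y / 2) 1); lra).
  assert (Hh1 : Rabs h < 1) by (pose proof (Rmin_r (y / 2) 1); lra).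
  assert (Hwin : - (y / 2) < h < y / 2) by (unfold Rabs in Hhy; destruct Rcase_abs; lra).
  set (Rem := fun v => kappa (y + h) v - kappa y v - h * (-2 * t * gamma y v)).
  assert (HRem : ex_RInt Rem 0 t).
  { apply ex_RInt_minusR; [apply ex_RInt_minusR; apply kappa_integrable|].
    apply ex_RInt_scalR, ex_RInt_scalR, gamma_integrable. }
  assert (HRem_eq : RInt Rem 0 t = Phi (y + h) - Phi y - h * (-2 * t * Gam y)).
  { unfold Rem, Phi, Gam.
    rewrite RInt_minusR, RInt_minusR, RInt_scalR, RInt_scalR;
      auto using kappa_integrable, gamma_integrable, ex_RInt_minusR, ex_RInt_scalR. }
  rewrite <- HRem_eq.
  eapply Rle_trans.
  { apply (abs_RInt_le_const _ 0 t (72 / y ^ 2 * h ^ 2) (Rlt_le _ _ t_pos) HRem).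
    intros v Hv. apply kappa_taylor_bound; auto. }
  rewrite <- (pow2_abs h).
  replace ((t - 0) * (72 / y ^ 2 * Rabs h ^ 2)) with (72 * t / y ^ 2 * Rabs h * Rabs h)
    by (field; lra).
  apply Rmult_le_compat_l.
  - apply Rmult_le_pos; [apply Rlt_le, Rdiv_lt_0_compat; lra | apply Rabs_pos].
  - apply le_sqrt_of_le_1. split; [apply Rabs_pos | lra].
Qed.

Lemma Gam_continuous y : 0 <= y -> continuous Gam y.
Proof.
  intros Hy. apply continuity_pt_filterlim.
  destruct (Req_dec y 0) as [->|Hy0].
  - apply (continuity_of_sqrt_bound Gam 0 1 (hoelder_const t));
      [lra | apply hoelder_const_nonneg, t_pos|].
    intros h _. rewrite Rplus_0_l, Gam_zero, Rminus_0_r.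
    destruct (Req_dec h 0) as [->|Hh]; [|apply Gam_small, Hh].
    rewrite Gam_zero, Rabs_R0.
    apply Rmult_le_pos; [apply hoelder_const_nonneg, t_pos | apply sqrt_pos].
  (* For y > 0, integrating gamma_lipschitz shows Gam is 36 / y^2-Lipschitz near y. *)
  - assert (Hyp : 0 < y) by lra. assert (Hy2 : 0 < y ^ 2) by (apply pow2_gt_0; lra).
    apply (continuity_of_sqrt_bound Gam y (Rmin (y / 2) 1) (36 / y ^ 2));
      [apply Rmin_pos; lra | apply Rlt_le, Rdiv_lt_0_compat; lra |].
    intros h Hh.
    assert (Hhy : Rabs h < y / 2) by (pose proof (Rmin_l (y / 2) 1); lra).
    assert (Hh1 : Rabs h < 1) by (pose proof (Rmin_r (y / 2) 1); lra).
    assert (Hwin : - (y / 2) < h < y / 2) by (unfold Rabs in Hhy; destruct Rcase_abs; lra).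
    unfold Gam. rewrite <- RInt_minusR by apply gamma_integrable.
    eapply Rle_trans.
    { apply (abs_RInt_le_const _ 0 t (36 / (t * y ^ 2) * Rabs h) (Rlt_le _ _ t_pos));
        [|intros v Hv; apply gamma_lipschitz; auto].
      apply ex_RInt_minusR; apply gamma_integrable. }
    replace ((t - 0) * (36 / (t * y ^ 2) * Rabs h)) with (36 / y ^ 2 * Rabs h) by (field; lra).
    apply Rmult_le_compat_l; [apply Rlt_le, Rdiv_lt_0_compat; lra|].
    apply le_sqrt_of_le_1. split; [apply Rabs_pos | lra].
Qed.

(* Fundamental theorem of calculus for the antiderivative -Phi/(2t) of Gam:
   int_0^1 Gam = (Phi 0 - Phi 1) / (2 t) = 1/2 - Phi 1 / (2 t). *)
Lemma integral_Gam : ex_RInt Gam 0 1 /\ RInt Gam 0 1 = 1 / 2 - Phi 1 / (2 * t).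
Proof.
  assert (Hderiv : forall y, 0 <= y -> is_derive (fun z => - / (2 * t) * Phi z) y (Gam y)).
  { intros y Hy. replace (Gam y) with (- / (2 * t) * (-2 * t * Gam y)) by (field; lra).
    apply is_derive_scal.
    destruct (Req_dec y 0) as [->|Hy0]; [apply Phi_derive_zero | apply Phi_derive_pos; lra]. }
  assert (HFTC : is_RInt Gam 0 1 (minus (- / (2 * t) * Phi 1) (- / (2 * t) * Phi 0))).
  { apply (is_RInt_derive (V:=R_CompleteNormedModule) (fun z => - / (2 * t) * Phi z));
      rewrite Rmin_left, Rmax_right by lra;
      intros y Hy; [apply Hderiv | apply Gam_continuous]; lra. }
  split; [eexists; exact HFTC|].
  rewrite (is_RInt_unique _ _ _ _ HFTC), Phi_zero. unfold minus, plus, opp. simpl.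
  field. lra.
Qed.

Lemma boundary_term_bound : Rabs (Phi 1 / (2 * t)) <= exp (- (1 / t)) / 2.
Proof.
  assert (HPhi : Rabs (Phi 1) <= t * exp (- (1 / t))).
  { unfold Phi. eapply Rle_trans.
    - apply (abs_RInt_le_of_dominated _ (fun _ => exp (- (1 / t))));
        [lra | apply kappa_integrable | apply ex_RInt_const |].
      intros v Hv. rewrite Rabs_right by (apply Rle_ge, Rlt_le, kappa_pos). apply kappa_one_le, Hv.
    - rewrite RInt_constR. lra. }
  unfold Rdiv. rewrite Rabs_mult, Rabs_inv, (Rabs_right (2 * t)) by lra.
  apply (Rmult_le_reg_r (2 * t)); [lra|].
  replace (Rabs (Phi 1) * / (2 * t) * (2 * t)) with (Rabs (Phi 1)) by (field; lra).
  lra.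
Qed.

Lemma NEconv_eq_Gam x : 0 <= x ->
  ex_RInt (fun s => NEp x (t - s) * NEp x s) 0 t /\ NEconv x t = Gam x.
Proof.
  intros Hx.
  assert (Hext : forall s, Rmin 0 t < s < Rmax 0 t -> gamma x s = NEp x (t - s) * NEp x s).
  { rewrite Rmin_left, Rmax_right by lra. intros s Hs. symmetry. apply NEp_product_eq; auto. }
  assert (Hint : ex_RInt (fun s => NEp x (t - s) * NEp x s) 0 t)
    by (apply (ex_RInt_ext (gamma x)); [exact Hext | apply gamma_integrable]).
  split; [exact Hint|].
  unfold NEconv. rewrite Defs_RInt_eq by exact Hint.
  unfold Gam. symmetry. apply RInt_ext, Hext.
Qed.

Lemma integral_NEconv : ex_RInt (fun x => NEconv x t) 0 1 /\
  Defs.RInt (fun x => NEconv x t) 0 1 = 1 / 2 - Phi 1 / (2 * t).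
Proof.
  destruct integral_Gam as [HGam Hvalue].
  assert (Hext : forall x, Rmin 0 1 < x < Rmax 0 1 -> Gam x = NEconv x t).
  { rewrite Rmin_left, Rmax_right by lra. intros x Hx. symmetry. apply NEconv_eq_Gam. lra. }
  assert (Hint : ex_RInt (fun x => NEconv x t) 0 1) by (apply (ex_RInt_ext Gam); assumption).
  split; [exact Hint|].
  rewrite Defs_RInt_eq, <- Hvalue by exact Hint. symmetry. apply RInt_ext, Hext.
Qed.

End TimeKernel.

Theorem proposition6p1 :
  forall N : nat,
  exists C delta : R, 0 < delta /\
    forall t : R, 0 < t < delta ->
      (forall x : R, 0 <= x <= 1 ->
         inhabited (Riemann_integrable (fun s => NEp x (t - s) * NEp x s) 0 t)) /\
      inhabited (Riemann_integrable (fun x => NEconv x t) 0 1) /\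
      Rabs (Defs.RInt (fun x => NEconv x t) 0 1 - 1 / 2) <= C * t ^ N.
Proof.
  intros N. exists (INR N ^ N / 2), 1. split; [lra|].
  intros t [Ht _].
  destruct (integral_NEconv t Ht) as [Hint Hvalue].
  split; [|split].
  - intros x Hx. constructor. apply ex_RInt_Reals_0, NEconv_eq_Gam; lra.
  - constructor. apply ex_RInt_Reals_0, Hint.
  - rewrite Hvalue.
    replace (1 / 2 - Phi t 1 / (2 * t) - 1 / 2) with (- (Phi t 1 / (2 * t))) by ring.
    rewrite Rabs_Ropp.
    pose proof (boundary_term_bound t Ht). pose proof (exp_neg_inv_le_pow N t Ht). lra.
Qed.
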